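(* Consider an instance with $n$ agents, $m$ indivisible items and binary additive valuations (notation as in the context). For any two stable allocations $\chi,\chi'$ with profiles $(h_1,\dots,h_n)$ and $(h'_1,\dots,h'_n)$, we have $|h_i-h'_i|\le 1$ for every agent $i\in[n]$; i.e. the Chebyshev distance between $\mathbf{p}(\chi)$ and $\mathbf{p}(\chi')$ is at most $1$.
   Context: Agents $[n]$, items $[m]$. Each agent $i$ has a set $L_i\subseteq[m]$ of liked items and valuation $v_i(S)=|S\cap L_i|$. An allocation $\chi=(\chi_1,\dots,\chi_n)$ is a tuple of pairwise disjoint subsets of $[m]$; it is clean if $\chi_i\subseteq L_i$ for all $i$, and max-USW if it maximizes $\sum_i v_i(\chi_i)$. Throughout, ''allocation'' means a clean max-USW allocation. Profile: $\mathbf{p}(\chi)=(h_1,\dots,h_n)$, $h_i=|\chi_i|$. Given $\chi$, form a directed graph on $[n]$ with an arc $(i,i')$, $i\ne i'$, whenever some $o\in\chi_i$ has $o\in L_{i'}$; $\chi$ admits a transfer $u\to v$ if there is a simple directed path from $u$ to $v$ with at least one arc. A transfer $u\to v$ is narrowing if $h_u\ge h_v+2$; $\chi$ is stable if it admits no narrowing transfer. *)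

From mathcomp Require Import all_boot.
Set Implicit Arguments. Unset Strict Implicit. Unset Printing Implicit Defensive.

(* Agents are 'I_n, items are 'I_m.  L i = set of items liked by agent i.
   An allocation is a family chi : {ffun 'I_n -> {set 'I_m}}. *)

Definition val (n m : nat) (L : 'I_n -> {set 'I_m}) (i : 'I_n) (S : {set 'I_m}) : nat :=
  #|S :&: L i|.

Definition is_alloc (n m : nat) (chi : {ffun 'I_n -> {set 'I_m}}) : Prop :=
  forall i j : 'I_n, i != j -> [disjoint chi i & chi j].

Definition clean (n m : nat) (L : 'I_n -> {set 'I_m}) (chi : {ffun 'I_n -> {set 'I_m}}) : Prop :=
  forall i, chi i \subset L i.

Definition usw (n m : nat) (L : 'I_n -> {set 'I_m}) (chi : {ffun 'I_n -> {set 'I_m}}) : nat :=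
  \sum_(i < n) val L i (chi i).

Definition max_usw (n m : nat) (L : 'I_n -> {set 'I_m}) (chi : {ffun 'I_n -> {set 'I_m}}) : Prop :=
  is_alloc chi /\ forall chi', is_alloc chi' -> usw L chi' <= usw L chi.

(* "allocation" in the paper = clean max-USW allocation *)
Definition clean_max_usw (n m : nat) (L : 'I_n -> {set 'I_m}) (chi : {ffun 'I_n -> {set 'I_m}}) : Prop :=
  clean L chi /\ max_usw L chi.

Definition prof (n m : nat) (chi : {ffun 'I_n -> {set 'I_m}}) (i : 'I_n) : nat := #|chi i|.

Definition arc (n m : nat) (L : 'I_n -> {set 'I_m}) (chi : {ffun 'I_n -> {set 'I_m}}) : rel 'I_n :=
  fun i i' => (i != i') && [exists o, (o \in chi i) && (o \in L i')].

Definition admits_transfer (n m : nat) (L : 'I_n -> {set 'I_m}) (chi : {ffun 'I_n -> {set 'I_m}})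
  (u v : 'I_n) : Prop :=
  exists p : seq 'I_n, [/\ p != [::], path (arc L chi) u p, last u p = v & uniq (u :: p)].

Definition narrowing (n m : nat) (L : 'I_n -> {set 'I_m}) (chi : {ffun 'I_n -> {set 'I_m}})
  (u v : 'I_n) : Prop :=
  admits_transfer L chi u v /\ prof chi v + 2 <= prof chi u.

Definition stable (n m : nat) (L : 'I_n -> {set 'I_m}) (chi : {ffun 'I_n -> {set 'I_m}}) : Prop :=
  clean_max_usw L chi /\ forall u v, ~ narrowing L chi u v.

From Pilot Require Import Defs.
From mathcomp Require Import all_boot zify.

(* If h_i >= h'_i + 2, let R be the agents reachable from i along "some item
   of chi_a lies in chi'_b". Every item of chi_a is liked by a, so maximality of
   chi' forces it into some chi'-bundle, necessarily of an agent of R; since the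
   chi-bundles are disjoint, they hold no more items over R than the
   chi'-bundles. Hence some j in R has h_j < h'_j, and j <> i. A simple path
   from i to j is a transfer i -> j in chi, and its reversal a transfer j -> i
   in chi'; stability of both gives h_i <= h_j + 1 <= h'_j <= h'_i + 1. *)

Set Implicit Arguments.
Unset Strict Implicit.
Unset Printing Implicit Defensive.

Lemma card_bigcup_disjoint (I T : finType) (A : {pred I}) (F : I -> {set T}) :
  (forall i j, i != j -> [disjoint F i & F j]) ->
  #|\bigcup_(i in A) F i| = \sum_(i in A) #|F i|.
Proof.
move=> disjF; pose G i := if i \in A then F i else set0.
have disjG i j : i != j -> [disjoint G i & G j].
  rewrite /G -setI_eq0; case: (i \in A); case: (j \in A);
    by rewrite ?set0I ?setI0 // setI_eq0; apply: disjF.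
rewrite big_mkcond -sum1_card (partition_disjoint_bigcup _ _ disjG).
rewrite [RHS]big_mkcond; apply: eq_bigr => i _.
by rewrite sum1_card /G; case: (i \in A); rewrite ?cards0.
Qed.

Lemma card_bigcup_le (I T : finType) (A : {pred I}) (F : I -> {set T}) :
  #|\bigcup_(i in A) F i| <= \sum_(i in A) #|F i|.
Proof.
elim/big_rec2: _ => [|i k U _ leUk]; first by rewrite cards0.
by rewrite (leq_trans (leq_card_setU _ _).1) ?leq_add2l.
Qed.

Lemma leq_sum_card_cover (I T : finType) (A : {pred I}) (F G : I -> {set T}) :
  (forall i j, i != j -> [disjoint F i & F j]) ->
  (forall i x, i \in A -> x \in F i -> exists2 j, j \in A & x \in G j) ->
  \sum_(i in A) #|F i| <= \sum_(i in A) #|G i|.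
Proof.
move=> disjF coverF; rewrite -card_bigcup_disjoint //.
apply: leq_trans (card_bigcup_le A G); apply/subset_leq_card/subsetP.
move=> x /bigcupP [i Ai xFi]; have [j Aj xGj] := coverF i x Ai xFi.
by apply/bigcupP; exists j.
Qed.

Lemma exists_ltn_of_leq_sum (I : finType) (A : {pred I}) (f g : I -> nat) i :
  i \in A -> g i < f i -> \sum_(j in A) f j <= \sum_(j in A) g j ->
  exists2 j, j \in A & f j < g j.
Proof.
move=> Ai lt_i le_fg.
case: (pickP [pred j | (j \in A) && (f j < g j)]) => [j /andP[]|ge_fg].
  by exists j.
have le_rest : \sum_(j in A | j != i) g j <= \sum_(j in A | j != i) f j.
  apply: leq_sum => j /andP[Aj _].
  by move: (ge_fg j); rewrite /= Aj ltnNge => /negbFE.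
exfalso; move: le_fg; rewrite (bigD1 i) //= [X in _ <= X](bigD1 i) //=; lia.
Qed.

Definition simple_path (T : eqType) (e : rel T) (u v : T) (p : seq T) : Prop :=
  [/\ p != [::], path e u p, last u p = v & uniq (u :: p)].

Lemma connect_simple_path (T : finType) (e : rel T) (u v : T) :
  u != v -> connect e u v -> exists p, simple_path e u v p.
Proof.
move=> /[swap] /connectP [p0 + ->] => /shortenP [p e_p uniq_p _] u_neq_last.
by exists p; split=> //; case: p {e_p uniq_p} u_neq_last; rewrite ?eqxx.
Qed.

Lemma sub_simple_path (T : eqType) (e e' : rel T) (u v : T) (p : seq T) :
  subrel e e' -> simple_path e u v p -> simple_path e' u v p.
Proof. by move=> ee' [? /(sub_path ee') ? ? ?]. Qed.

Lemma simple_path_rev (T : eqType) (e : rel T) (u v : T) (p : seq T) :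
  simple_path e u v p -> simple_path [rel x y | e y x] v u (rev (belast u p)).
Proof.
case=> p_nil e_p <- uniq_p; split.
- by rewrite -size_eq0 size_rev size_belast size_eq0.
- by rewrite rev_path.
- by case: p p_nil {e_p uniq_p} => //= x p _; rewrite rev_cons last_rcons.
- by rewrite -rev_rcons -lastI rev_uniq.
Qed.

Section Allocations.

Variables (n m : nat) (L : 'I_n -> {set 'I_m}).
Implicit Types (chi : {ffun 'I_n -> {set 'I_m}}) (a b : 'I_n) (o : 'I_m).

Definition give_item chi a o : {ffun 'I_n -> {set 'I_m}} :=
  [ffun b => if b == a then o |: chi b else chi b].

Lemma is_alloc_give_item chi a o :
  is_alloc chi -> (forall b, o \notin chi b) -> is_alloc (give_item chi a o).
Proof.
move=> disj_chi free_o b b' neq_bb'; rewrite !ffunE.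
have disj_setU1 (S S' : {set 'I_m}) :
    o \notin S' -> [disjoint S & S'] -> [disjoint o |: S & S'].
  move=> S'_o; rewrite -!setI_eq0 setIUl setU_eq0 => ->.
  by rewrite andbT setI_eq0 disjoints1.
case: eqP => [b_a|_]; case: eqP => [b'_a|_].
- by rewrite b_a b'_a eqxx in neq_bb'.
- by rewrite disj_setU1 ?disj_chi.
- by rewrite disjoint_sym disj_setU1 ?disj_chi // eq_sym.
- exact: disj_chi.
Qed.

Lemma val_setU1 a o (S : {set 'I_m}) :
  o \in L a -> o \notin S -> Defs.val L a (o |: S) = (Defs.val L a S).+1.
Proof.
move=> La_o S_o; rewrite /Defs.val setIUl (setIidPl _) ?sub1set // cardsU1.
by rewrite inE (negbTE S_o).
Qed.

Lemma usw_give_item chi a o :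
  o \in L a -> o \notin chi a -> usw L (give_item chi a o) = (usw L chi).+1.
Proof.
move=> La_o chi_o; rewrite /usw (bigD1 a) // [X in _ = X.+1](bigD1 a) //=.
rewrite ffunE eqxx val_setU1 // addSn; congr (_ + _).+1.
by apply: eq_bigr => b neq_ba; rewrite ffunE (negbTE neq_ba).
Qed.

Lemma max_usw_allocates_liked chi a o :
  max_usw L chi -> o \in L a -> exists b, o \in chi b.
Proof.
move=> [disj_chi max_chi] La_o.
case: (pickP (fun b => o \in chi b)) => [b chi_b_o | free_o]; first by exists b.
have free_o' b : o \notin chi b by rewrite free_o.
have := max_chi _ (is_alloc_give_item a disj_chi free_o').
by rewrite usw_give_item // ltnn.
Qed.

Definition hands_over chi chi' : rel 'I_n :=
  fun a b => (a != b) && [exists o, (o \in chi a) && (o \in chi' b)].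

Lemma hands_over_arc chi chi' :
  clean L chi' -> subrel (hands_over chi chi') (Defs.arc L chi).
Proof.
move=> clean_chi' a b /andP [neq_ab /existsP [o /andP [chi_a_o chi'_b_o]]].
rewrite /Defs.arc neq_ab; apply/existsP; exists o.
by rewrite chi_a_o (subsetP (clean_chi' b)).
Qed.

Lemma hands_over_arc_rev chi chi' :
  clean L chi -> subrel [rel b a | hands_over chi chi' a b] (Defs.arc L chi').
Proof.
move=> clean_chi b a /andP [neq_ab /existsP [o /andP [chi_a_o chi'_b_o]]].
rewrite /Defs.arc eq_sym neq_ab; apply/existsP; exists o.
by rewrite chi'_b_o (subsetP (clean_chi a)).
Qed.

Lemma stable_prof_le chi chi' i :
  stable L chi -> stable L chi' -> prof chi i <= prof chi' i + 1.
Proof.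
move=> [[clean_chi [alloc_chi _]] no_narrowing].
move=> [[clean_chi' max_chi'] no_narrowing'].
rewrite leqNgt; apply/negP => lt_i.
pose R := [set b | connect (hands_over chi chi') i b].
have cover_R a o : a \in R -> o \in chi a -> exists2 b, b \in R & o \in chi' b.
  move=> R_a chi_a_o.
  have La_o := subsetP (clean_chi a) o chi_a_o.
  have [b chi'_b_o] := max_usw_allocates_liked max_chi' La_o.
  exists b => //; case: (eqVneq a b) => [<- // | neq_ab].
  move: R_a; rewrite !inE => /connect_trans; apply; apply: connect1.
  by rewrite /hands_over neq_ab; apply/existsP; exists o; rewrite chi_a_o.
have [j R_j lt_j] : exists2 j, j \in R & prof chi j < prof chi' j.
  apply: (exists_ltn_of_leq_sum (i := i)); first by rewrite inE connect0.
    by rewrite /prof in lt_i *; lia.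
  exact: leq_sum_card_cover.
have neq_ij : i != j by apply: contraTneq lt_j => <-; rewrite -leqNgt; lia.
move: R_j; rewrite inE => /(connect_simple_path neq_ij) [p path_ij].
have transfer_ij : admits_transfer L chi i j.
  by exists p; apply: sub_simple_path path_ij; apply: hands_over_arc.
have transfer_ji : admits_transfer L chi' j i.
  eexists; apply: sub_simple_path (simple_path_rev path_ij).
  exact: hands_over_arc_rev.
have le_ij : prof chi i < prof chi j + 2.
  by rewrite ltnNge; apply/negP => ge_ij; apply: (no_narrowing i j).
have le_ji : prof chi' j < prof chi' i + 2.
  by rewrite ltnNge; apply/negP => ge_ji; apply: (no_narrowing' j i).
lia.
Qed.

End Allocations.

Theorem theorem2 (n m : nat) (L : 'I_n -> {set 'I_m})
  (chi chi' : {ffun 'I_n -> {set 'I_m}}) :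
  stable L chi -> stable L chi' ->
  forall i : 'I_n, prof chi i <= prof chi' i + 1 /\ prof chi' i <= prof chi i + 1.
Proof.
move=> stable_chi stable_chi' i.
split; first exact: stable_prof_le i stable_chi stable_chi'.
exact: stable_prof_le i stable_chi' stable_chi.
Qed.
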